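(* Let $1>R>\tfrac12$ and $R>P>0$, and let $$\mathrm{ZDSstrip}=\{(x,y)\in\mathbb R^2:\ x\ge -1\ge y,\ -R^{-1}\ge x+y\ge -P^{-1}\}.$$ Assume $(\bar\alpha,\bar\beta)\in\mathrm{ZDSstrip}$ with $\bar\alpha+\bar\beta=-Z^{-1}$. Then $-\bar\beta\ge\max(1,|\bar\alpha|)$, and $-\bar\beta=|\bar\alpha|$ if and only if $\bar\alpha=\bar\beta=-1$. If also $(\bar a,\bar b)\in\mathrm{ZDSstrip}$, then $D=\bar\beta\bar b-\bar\alpha\bar a\ge0$, with equality if and only if $\bar\alpha=\bar\beta=\bar a=\bar b=-1$. *)

From HB Require Import structures.
From mathcomp Require Import all_boot all_order all_algebra.
Set Implicit Arguments. Unset Strict Implicit. Unset Printing Implicit Defensive.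
Import Order.TTheory GRing.Theory Num.Theory.
Local Open Scope ring_scope.

Definition ZDSstrip (K : realFieldType) (R P x y : K) : Prop :=
  [/\ -1 <= x, y <= -1, x + y <= - R^-1 & - P^-1 <= x + y].

(** Points of the strip satisfy [-1 <= x], [y <= -1] and [x + y < 0], which
    already force [|x| <= -y], with equality only at [x = y = -1]; of the
    hypotheses on [R], [P] and [Z] only [0 < R] is needed.  The
    product [alpha a] is then dominated by [|alpha| |a| <= (-beta) (-b) = beta b],
    and equality in both factors pins all four coordinates to [-1]. *)

From mathcomp Require Import all_boot all_order all_algebra.
From mathcomp Require Import lra.
Import Order.TTheory GRing.Theory Num.Theory.
Local Open Scope ring_scope.

Lemma ZDSstrip_sum_lt0 {K : realFieldType} {R P x y : K} :
  0 < R -> ZDSstrip R P x y -> x + y < 0.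
Proof.
move=> R_gt0 [_ _ sum_le _].
by apply: le_lt_trans sum_le _; rewrite oppr_lt0 invr_gt0.
Qed.

Lemma norm_le_opp {K : realDomainType} {x y : K} :
  -1 <= x -> y <= -1 -> x + y < 0 -> `|x| <= - y.
Proof. by move=> *; case: (lerP 0 x) => [/ger0_norm|/ltr0_norm] ->; lra. Qed.

Lemma norm_eq_opp {K : realDomainType} {x y : K} :
  -1 <= x -> y <= -1 -> x + y < 0 -> - y = `|x| -> x = -1 /\ y = -1.
Proof.
by move=> x_ge y_le sum_lt0; case: (lerP 0 x) => [/ger0_norm|/ltr0_norm] -> ?;
  split; lra.
Qed.

Lemma mul_le_of_norm_le {K : realDomainType} {x a u v : K} :
  `|x| <= u -> `|a| <= v -> x * a <= u * v.
Proof.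
move=> x_le a_le; apply: le_trans (ler_norm _) _; rewrite normrM.
by apply: ler_pM; rewrite ?normr_ge0.
Qed.

Lemma mul_eq_of_norm_le {K : realDomainType} {x a u v : K} :
  0 < u -> 0 < v -> `|x| <= u -> `|a| <= v -> x * a = u * v ->
  `|x| = u /\ `|a| = v.
Proof.
move=> u_gt0 v_gt0 x_le a_le xa_eq.
have prod_ge : u * v <= `|x| * `|a| by rewrite -normrM -xa_eq ler_norm.
have x_ge0 := normr_ge0 x; have a_ge0 := normr_ge0 a.
by split; apply/eqP; rewrite eq_le ?x_le ?a_le /=; nra.
Qed.

Theorem lemma3p1 (K : realFieldType) (R P Z alpha beta : K) :
  2^-1 < R -> R < 1 -> 0 < P -> P < R ->
  ZDSstrip R P alpha beta -> alpha + beta = - Z^-1 ->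
  [/\ Num.max 1 `|alpha| <= - beta,
      (- beta = `|alpha| <-> alpha = -1 /\ beta = -1) &
      forall a b : K, ZDSstrip R P a b ->
        0 <= beta * b - alpha * a /\
        (beta * b - alpha * a = 0 <-> [/\ alpha = -1, beta = -1, a = -1 & b = -1])].
Proof.
move=> R_gt_half _ _ _ S_ab _.
have R_gt0 : 0 < R by apply: lt_trans R_gt_half; rewrite invr_gt0 ltr0n.
have [alpha_ge beta_le _ _] := S_ab.
have sum_ab := ZDSstrip_sum_lt0 R_gt0 S_ab.
have norm_alpha := norm_le_opp alpha_ge beta_le sum_ab.
split.
- by rewrite ge_max norm_alpha andbT; lra.
- split; first exact: norm_eq_opp.
  by case=> -> ->; rewrite normrN normr1 opprK.
move=> a b S_AB; have [a_ge b_le _ _] := S_AB.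
have sum_AB := ZDSstrip_sum_lt0 R_gt0 S_AB.
have norm_a := norm_le_opp a_ge b_le sum_AB.
rewrite -mulrNN subr_ge0 mul_le_of_norm_le //; split=> //; split.
- move=> /eqP; rewrite subr_eq0 => /eqP /esym D0.
  have [||alpha_eq a_eq] := mul_eq_of_norm_le _ _ norm_alpha norm_a D0; try lra.
  have [-> ->] := norm_eq_opp alpha_ge beta_le sum_ab (esym alpha_eq).
  by have [-> ->] := norm_eq_opp a_ge b_le sum_AB (esym a_eq).
- by case=> -> -> -> ->; rewrite mulrNN subrr.
Qed.
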